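(* Let $E=[n]$, let $f:2^E\to\mathbb{R}_{\ge0}$ be a submodular function with Lovász extension $F$, and let $d\in\mathbb{R}^n$ be a nonzero direction. Then \[ \max\{\lambda:\ \lambda d\in P(f)\}=\min\{F(x):\ x\in\mathbb{R}^n_{\ge 0},\ d^\top x=1\}. \]
   Context: For $x\in\mathbb{R}^n$ and $S\subseteq E$ write $x(S)=\sum_{i\in S}x_i$. The extended polymatroid is $P(f)=\{x\in\mathbb{R}^n: x(S)\le f(S)\ \forall S\subseteq E\}$ and the base polytope is $B(f)=\{x\in P(f): x(E)=f(E)\}$. The Lovász extension is $F(x)=\max_{v\in B(f)}v^\top x$; equivalently $F(x)=\sum_{i=1}^n x_{\pi_i}(f(S_i)-f(S_{i-1}))$ where $x_{\pi_1}\ge\cdots\ge x_{\pi_n}$ (ties broken lexicographically), $S_i=\{\pi_1,\dots,\pi_i\}$, $S_0=\emptyset$. *)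

From mathcomp Require Import all_boot all_order all_algebra.
Set Implicit Arguments. Unset Strict Implicit. Unset Printing Implicit Defensive.
Import Order.TTheory GRing.Theory Num.Theory.
Local Open Scope ring_scope.

Section Defs.
Variables (R : realFieldType) (n : nat).

Definition xsum (x : 'I_n -> R) (S : {set 'I_n}) : R := \sum_(i in S) x i.

Definition submodular (f : {set 'I_n} -> R) : Prop :=
  forall A B : {set 'I_n}, f (A :|: B) + f (A :&: B) <= f A + f B.

Definition in_polymatroid (f : {set 'I_n} -> R) (x : 'I_n -> R) : Prop :=
  forall S : {set 'I_n}, xsum x S <= f S.

Definition lovasz_rel (x : 'I_n -> R) : rel 'I_n :=
  fun i j => (x j < x i) || ((x i == x j) && (i <= j)%N).

Definition lovasz_order (x : 'I_n -> R) : seq 'I_n :=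
  sort (lovasz_rel x) (enum 'I_n).

(* Lovász extension: F(x) = sum_i x_{pi_i} (f(S_i) - f(S_{i-1})),
   S_i = {pi_1,...,pi_i}. *)
Definition lovasz (f : {set 'I_n} -> R) (x : 'I_n -> R) : R :=
  let s := lovasz_order x in
  \sum_(i <- s)
     x i * (f [set j in take (index i s).+1 s] - f [set j in take (index i s) s]).

Definition dot (d x : 'I_n -> R) : R := \sum_i d i * x i.

End Defs.

(* Weak duality is summation by parts. For y >= 0 with coordinates sorted as
   a_0 >= ... >= a_(n-1) >= a_n := 0 and chain S_1 < ... < S_n, one has
   F(y) = sum_k (a_k - a_(k+1)) f(S_(k+1)), a nonnegative combination of
   values of f; for the modular function S |-> v(S) the same formula gives
   v^T y, so v in P(f) implies v^T y <= F(y).  Equality is attained by a set S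
   minimising f(S)/d(S) over d(S) > 0: lam = f(S)/d(S) is the largest
   multiplier with lam d in P(f), and x = 1_S/d(S) has a single nontrivial
   level set, so F(x) = f(S)/d(S).  If d <= 0, all lam d with lam >= 0 lie in
   P(f) since f >= 0, and d^T y = 1 has no solution y >= 0. *)

From mathcomp Require Import all_boot all_order all_algebra.
From mathcomp Require Import ring.
Import Order.TTheory GRing.Theory Num.Theory.
Set Implicit Arguments.
Unset Strict Implicit.
Unset Printing Implicit Defensive.
Local Open Scope ring_scope.

Lemma sum_by_parts (R : comPzRingType) (a h : nat -> R) m :
  \sum_(0 <= k < m) a k * (h k.+1 - h k) =
  \sum_(0 <= k < m) (a k - a k.+1) * h k.+1 + a m * h m - a 0%N * h 0%N.
Proof.
elim: m => [|m IH]; first by rewrite !big_geq //; ring.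
by rewrite !big_nat_recr //= IH; ring.
Qed.

Lemma big_index_uniq (V : nmodType) (T : eqType) (r : seq T) (G : nat -> V) :
  uniq r -> \sum_(i <- r) G (index i r) = \sum_(0 <= k < size r) G k.
Proof.
elim: r G => [|a r IH] G /=; first by rewrite big_nil big_geq.
case/andP=> a_notin_r uniq_r; rewrite big_cons big_nat_recl //= eqxx.
congr (_ + _); rewrite -IH // !big_seq; apply: eq_bigr => i i_in_r.
by case: eqP i_in_r a_notin_r => // ->->.
Qed.

Section LovaszOrder.
Variables (R : realFieldType) (n : nat) (x : 'I_n -> R).
Local Notation s := (lovasz_order x).

(* The k-th largest coordinate of x, padded with 0 for k >= n. *)
Definition lovasz_value k : R := (map x s)`_k.

Definition lovasz_chain k : {set 'I_n} := [set j in take k s].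

Lemma uniq_lovasz_order : uniq s.
Proof. by rewrite sort_uniq enum_uniq. Qed.

Lemma size_lovasz_order : size s = n.
Proof. by rewrite size_sort size_enum_ord. Qed.

Lemma mem_lovasz_order j : j \in s.
Proof. by rewrite mem_sort mem_enum. Qed.

Lemma sorted_lovasz_values : sorted >=%R (map x s).
Proof.
rewrite sorted_map; apply: sub_sorted (sort_sorted _ _) => [i j|i j].
  by case/orP => [/ltW //| /andP [/eqP E _]]; rewrite /= E.
rewrite /lovasz_rel; case: (ltgtP (x j) (x i)) => //= _.
exact: leq_total.
Qed.

Lemma index_lovasz_order_lt j : (index j s < n)%N.
Proof. by rewrite -[X in (_ < X)%N]size_lovasz_order index_mem mem_lovasz_order. Qed.

Lemma lovasz_value_index j : lovasz_value (index j s) = x j.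
Proof.
by rewrite /lovasz_value (nth_map j) ?nth_index ?index_mem ?mem_lovasz_order.
Qed.

Lemma lovasz_value_out k : (n <= k)%N -> lovasz_value k = 0.
Proof. by move=> le_nk; rewrite /lovasz_value nth_default // size_map size_lovasz_order. Qed.

Lemma lovasz_value_nonincr_in i j :
  (i <= j)%N -> (j < n)%N -> lovasz_value j <= lovasz_value i.
Proof.
move=> le_ij lt_jn; have lt_in := leq_ltn_trans le_ij lt_jn.
apply: (sorted_leq_nth ge_trans lexx _ sorted_lovasz_values) => //;
  by rewrite inE size_map size_lovasz_order.
Qed.

Lemma lovasz_valueP k : (k < n)%N -> exists j, lovasz_value k = x j.
Proof.
move=> lt_kn; have {}lt_kn : (k < size (map x s))%N by rewrite size_map size_lovasz_order.
by rewrite /lovasz_value; have /mapP [j _ ->] := mem_nth 0 lt_kn; exists j.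
Qed.

Lemma lovasz_value_ge0 k : (forall i, 0 <= x i) -> 0 <= lovasz_value k.
Proof.
by move=> x_ge0; case: (ltnP k n) => [/lovasz_valueP [j ->] // | /lovasz_value_out ->].
Qed.

Lemma lovasz_value_nonincr k :
  (forall i, 0 <= x i) -> lovasz_value k.+1 <= lovasz_value k.
Proof.
move=> x_ge0; case: (ltnP k.+1 n) => [lt_k1n|le_nk1].
  exact: lovasz_value_nonincr_in.
by rewrite lovasz_value_out // lovasz_value_ge0.
Qed.

Lemma mem_lovasz_chain j k : (j \in lovasz_chain k) = (index j s < k)%N.
Proof. by rewrite inE in_take // mem_lovasz_order. Qed.

Lemma lovasz_chain_level k : (k < n)%N ->
  ((k.+1 < n)%N -> lovasz_value k.+1 < lovasz_value k) ->
  lovasz_chain k.+1 = [set j | lovasz_value k <= x j].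
Proof.
move=> lt_kn drop_k; apply/setP => j; rewrite mem_lovasz_chain inE ltnS.
have lt_jn := index_lovasz_order_lt j.
rewrite -lovasz_value_index; case: leqP => [le_jk | lt_kj].
  by rewrite lovasz_value_nonincr_in.
apply/esym/negbTE; rewrite -ltNge; apply: le_lt_trans (drop_k (leq_ltn_trans lt_kj lt_jn)).
exact: lovasz_value_nonincr_in.
Qed.

Lemma lovaszE_value (g : {set 'I_n} -> R) :
  lovasz g x = \sum_(0 <= k < n)
    lovasz_value k * (g (lovasz_chain k.+1) - g (lovasz_chain k)).
Proof.
rewrite -[in RHS]size_lovasz_order -big_index_uniq ?uniq_lovasz_order //.
by apply: eq_bigr => i _; rewrite lovasz_value_index.
Qed.

Lemma lovaszE_chain (g : {set 'I_n} -> R) : g set0 = 0 ->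
  lovasz g x = \sum_(0 <= k < n)
    (lovasz_value k - lovasz_value k.+1) * g (lovasz_chain k.+1).
Proof.
move=> g0; rewrite lovaszE_value.
rewrite (@sum_by_parts _ lovasz_value (fun k => g (lovasz_chain k))).
have -> : lovasz_chain 0 = set0 by apply/setP => j; rewrite mem_lovasz_chain inE.
by rewrite (@lovasz_value_out n) // g0 mul0r mulr0 subr0 addr0.
Qed.

Lemma lovasz_modular (d : 'I_n -> R) : lovasz (xsum d) x = dot d x.
Proof.
rewrite /lovasz /dot.
transitivity (\sum_(i <- s) x i * d i).
  apply: eq_bigr => i _.
  rewrite (take_nth i) ?index_mem ?mem_lovasz_order // nth_index ?mem_lovasz_order //.
  rewrite /xsum (_ : [set j in rcons _ i] = i |: [set j in take (index i s) s]).
    by rewrite big_setU1 ?addrK // inE in_take ?mem_lovasz_order ?ltnn.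
  by apply/setP => j; rewrite !inE mem_rcons in_cons.
rewrite (perm_big _ (permEl (perm_sort _ _))) big_enum.
by apply: eq_bigr => i _; rewrite mulrC.
Qed.

End LovaszOrder.

Lemma dot_le_lovasz (R : realFieldType) (n : nat) (f : {set 'I_n} -> R)
    (v y : 'I_n -> R) :
  f set0 = 0 -> in_polymatroid f v -> (forall i, 0 <= y i) ->
  dot v y <= lovasz f y.
Proof.
move=> f0 v_in_Pf y_ge0.
rewrite -lovasz_modular !lovaszE_chain //; last by rewrite /xsum big_set0.
apply: ler_sum => k _; apply: ler_wpM2l; last exact: v_in_Pf.
by rewrite subr_ge0 lovasz_value_nonincr.
Qed.

Lemma lovasz_scaled_indicator (R : realFieldType) (n : nat)
    (g : {set 'I_n} -> R) (S : {set 'I_n}) (c : R) :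
  g set0 = 0 -> 0 < c ->
  lovasz g (fun i => if i \in S then c else 0) = c * g S.
Proof.
move=> g0 c_gt0; set x := fun i => _.
have x_ge0 i : 0 <= x i by rewrite /x; case: ifP => // _; apply: ltW.
have value_pos_c k : (0 < lovasz_value x k) -> lovasz_value x k = c.
  case: (ltnP k n) => [/(lovasz_valueP x) [j ->] | /(lovasz_value_out x) ->].
    by rewrite /x; case: ifP; rewrite ?ltxx.
  by rewrite ltxx.
(* Only a drop from c to 0 contributes, and the chain there is the level set S. *)
have chain_S k : (0 <= k < n)%N ->
    (lovasz_value x k - lovasz_value x k.+1) * g (lovasz_chain x k.+1) =
    (lovasz_value x k - lovasz_value x k.+1) * g S.
  move=> /andP [_ lt_kn].
  have [drop_k | le_k] := ltP (lovasz_value x k.+1) (lovasz_value x k).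
    have val_k : lovasz_value x k = c.
      by apply: value_pos_c; apply: le_lt_trans drop_k; apply: lovasz_value_ge0.
    rewrite lovasz_chain_level // val_k; congr (_ * g _); apply/setP => j.
    by rewrite inE /x; case: (j \in S); rewrite ?lexx // leNgt c_gt0.
  have -> : lovasz_value x k.+1 = lovasz_value x k.
    by apply/le_anti; rewrite le_k lovasz_value_nonincr.
  by rewrite subrr !mul0r.
rewrite lovaszE_chain // (eq_big_nat _ _ chain_S) -mulr_suml.
rewrite (@telescope_sumr_eq _ 0 n (fun k => - lovasz_value x k)) => [|//|k _].
  rewrite lovasz_value_out // oppr0 opprK add0r.
  case: (set_0Vmem S) => [-> | [j jS]]; first by rewrite g0 !mulr0.
  congr (_ * _); apply: value_pos_c.
  apply: lt_le_trans (lovasz_value_nonincr_in x (leq0n _) (index_lovasz_order_lt x j)).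
  by rewrite lovasz_value_index /x jS.
by rewrite opprK addrC.
Qed.

Lemma xsum_scale (R : realFieldType) (n : nat) (mu : R) (d : 'I_n -> R) S :
  xsum (fun i => mu * d i) S = mu * xsum d S.
Proof. by rewrite /xsum mulr_sumr. Qed.

Lemma dot_scale (R : realFieldType) (n : nat) (mu : R) (d y : 'I_n -> R) :
  dot (fun i => mu * d i) y = mu * dot d y.
Proof. by rewrite /dot mulr_sumr; apply: eq_bigr => i _; rewrite mulrA. Qed.

Lemma in_polymatroid_nonpos (R : realFieldType) (n : nat)
    (f : {set 'I_n} -> R) (v : 'I_n -> R) :
  (forall S, 0 <= f S) -> (forall i, v i <= 0) -> in_polymatroid f v.
Proof. by move=> f_ge0 v_le0 S; apply: le_trans (f_ge0 S); apply: sumr_le0. Qed.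

Section MinRatio.
Variables (R : realFieldType) (n : nat) (f : {set 'I_n} -> R) (d : 'I_n -> R).
Variable S : {set 'I_n}.
Hypotheses (f_ge0 : forall T, 0 <= f T) (dS_gt0 : 0 < xsum d S).
Hypothesis S_min : forall T, 0 < xsum d T -> f S / xsum d S <= f T / xsum d T.

Local Notation lam := (f S / xsum d S).

Lemma min_ratio_in_polymatroid : in_polymatroid f (fun i => lam * d i).
Proof.
move=> T; rewrite xsum_scale; have [dT_gt0 | dT_le0] := ltP 0 (xsum d T).
  by rewrite -ler_pdivlMr //; apply: S_min.
apply: le_trans (f_ge0 T); apply: mulr_ge0_le0 => //.
by rewrite divr_ge0 // ltW.
Qed.

Lemma min_ratio_max mu : in_polymatroid f (fun i => mu * d i) -> mu <= lam.
Proof. by move=> /(_ S); rewrite xsum_scale ler_pdivlMr. Qed.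

Local Notation x := (fun i => if i \in S then (xsum d S)^-1 else 0).

Lemma dot_min_ratio_indicator : dot d x = 1.
Proof.
rewrite /dot (bigID (mem S)) /= [X in _ + X]big1 => [|i /negbTE ->]; last exact: mulr0.
rewrite addr0 -(mulfV (lt0r_neq0 dS_gt0)) /xsum mulr_suml.
by apply: eq_bigr => i ->.
Qed.

Lemma lovasz_min_ratio_indicator : f set0 = 0 -> lovasz f x = lam.
Proof. by move=> f0; rewrite lovasz_scaled_indicator ?invr_gt0 // mulrC. Qed.

End MinRatio.

Theorem theorem1 (R : realFieldType) (n : nat) (f : {set 'I_n} -> R)
    (d : 'I_n -> R)
    (f_ge0 : forall S, 0 <= f S)
    (f0 : f set0 = 0)
    (f_sub : submodular f)
    (d_nz : ~ (forall i, d i = 0)) :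
  (exists (lam : R) (x : 'I_n -> R),
      [/\ in_polymatroid f (fun i => lam * d i),
          (forall mu : R, in_polymatroid f (fun i => mu * d i) -> mu <= lam),
          (forall i, 0 <= x i) /\ dot d x = 1,
          (forall y : 'I_n -> R, (forall i, 0 <= y i) -> dot d y = 1 ->
              lovasz f x <= lovasz f y)
        & lam = lovasz f x])
  \/
  ((forall M : R, exists mu : R, M < mu /\ in_polymatroid f (fun i => mu * d i))
   /\ ~ (exists y : 'I_n -> R, (forall i, 0 <= y i) /\ dot d y = 1)).
Proof.
have [[i0 d_i0_gt0] | d_le0] : (exists i, 0 < d i) \/ (forall i, d i <= 0).
  case: (boolP [exists i, 0 < d i]) => [/existsP | /existsPn d_ngt0]; first by left.
  by right=> i; rewrite leNgt d_ngt0.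
- have d_i0 : 0 < xsum d [set i0] by rewrite /xsum big_set1.
  have [S dS_gt0 S_min] :=
    arg_minP (P := fun T => 0 < xsum d T) (fun T => f T / xsum d T) d_i0.
  left; exists (f S / xsum d S), (fun i => if i \in S then (xsum d S)^-1 else 0).
  split; [exact: min_ratio_in_polymatroid | exact: min_ratio_max | split | |].
  + by move=> i; case: ifP => // _; rewrite invr_ge0 ltW.
  + exact: dot_min_ratio_indicator.
  + move=> y y_ge0 dy; rewrite lovasz_min_ratio_indicator // -[X in X <= _]mulr1 -dy.
    by rewrite -dot_scale; apply: dot_le_lovasz => //; apply: min_ratio_in_polymatroid.
  + by rewrite lovasz_min_ratio_indicator.
- right; split.
    move=> M; exists (`|M| + 1); split; first by rewrite (le_lt_trans (ler_norm M)) ?ltrDl.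
    apply: in_polymatroid_nonpos => // i; apply: mulr_ge0_le0 => //.
    by rewrite addr_ge0.
  case=> y [y_ge0 dy]; suff : dot d y <= 0 by rewrite dy ler10.
  by apply: sumr_le0 => i _; apply: mulr_le0_ge0.
Qed.
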